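(* If $X$ is a strongly $\delta$-hyperbolic directed graph, then every strongly connected component of $X$ (viewed as a directed graph with the induced edges) is strongly $\delta$-hyperbolic.
   Context: Directed graphs may have loops and multiple edges; $d(u,v)$ is the length of a shortest directed path from $u$ to $v$ ($\infty$ if none). Strongly connected components are the equivalence classes of $x\sim y$ iff $d(x,y)<\infty$ and $d(y,x)<\infty$. Out-ball $\overrightarrow{\mathcal{B}}_r(x)=\{y : d(x,y)\le r\}$, in-ball $\overleftarrow{\mathcal{B}}_r(x)=\{y : d(y,x)\le r\}$, extended to sets by union. A path $[x_0,\dots,x_n]$ is a geodesic if $n=d(x_0,x_n)$. A directed geodesic triangle is an ordered triple $(p,q,r)$ of geodesics with the end of $p$ equal to the start of $q$ and $p\circ q$ having the same start and end as $r$; it is $\delta$-thin if every vertex of $r$ lies in $\overrightarrow{\mathcal{B}}_\delta(p)\cup\overleftarrow{\mathcal{B}}_\delta(q)$, every vertex of $p$ lies in $\overrightarrow{\mathcal{B}}_\delta(r)\cup\overleftarrow{\mathcal{B}}_\delta(q)$, and every vertex of $q$ lies in $\overrightarrow{\mathcal{B}}_\delta(p)\cup\overleftarrow{\mathcal{B}}_\delta(r)$. A directed graph is strongly $\delta$-hyperbolic if all its directed geodesic triangles are $\delta$-thin. *)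

From Stdlib Require Import Reals List.
Import ListNotations.
Open Scope R_scope.

Record digraph := Digraph {
  vert : Type;
  edge : Type;
  src : edge -> vert;
  tgt : edge -> vert }.

Section Defs.
Variable G : digraph.

Definition adj (x y : vert G) : Prop := exists e : edge G, src G e = x /\ tgt G e = y.

(* [x :: l] is a directed path (walk) x = x_0, x_1, ..., x_n in G; its length is length l *)
Fixpoint chain (x : vert G) (l : list (vert G)) : Prop :=
  match l with
  | nil => True
  | y :: l' => adj x y /\ chain y l'
  end.

Definition has_walk (x y : vert G) (n : nat) : Prop :=
  exists l, chain x l /\ last l x = y /\ length l = n.

Definition dist_le (x y : vert G) (r : R) : Prop :=
  exists n : nat, INR n <= r /\ has_walk x y n.

Definition reachable (x y : vert G) : Prop := exists n, has_walk x y n.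

Definition geodesic (x : vert G) (l : list (vert G)) : Prop :=
  chain x l /\ forall m, has_walk x (last l x) m -> (length l <= m)%nat.

Definition out_ball (S : list (vert G)) (r : R) (y : vert G) : Prop :=
  exists z, In z S /\ dist_le z y r.
Definition in_ball (S : list (vert G)) (r : R) (y : vert G) : Prop :=
  exists z, In z S /\ dist_le y z r.

(* The directed geodesic triangle (p, q, r) with p = [a :: lp], q = [b :: lq],
   r = [a :: lr], b = end of p, end of r = end of q, is delta-thin. *)
Definition thin_triangle (delta : R) (a : vert G) (lp : list (vert G))
    (lq : list (vert G)) (lr : list (vert G)) : Prop :=
  let p := a :: lp in
  let q := last lp a :: lq in
  let r := a :: lr in
  (forall v, In v r -> out_ball p delta v \/ in_ball q delta v) /\
  (forall v, In v p -> out_ball r delta v \/ in_ball q delta v) /\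
  (forall v, In v q -> out_ball p delta v \/ in_ball r delta v).

Definition strongly_hyperbolic (delta : R) : Prop :=
  forall (a : vert G) (lp lq lr : list (vert G)),
    geodesic a lp ->
    geodesic (last lp a) lq ->
    geodesic a lr ->
    last lr a = last lq (last lp a) ->
    thin_triangle delta a lp lq lr.

Definition scc_rel (x y : vert G) : Prop := reachable x y /\ reachable y x.

End Defs.

Definition induced (G : digraph) (P : vert G -> Prop) : digraph :=
  @Digraph {v : vert G | P v}
           {e : edge G | P (src G e) /\ P (tgt G e)}
           (fun e => exist P (src G (proj1_sig e)) (proj1 (proj2_sig e)))
           (fun e => exist P (tgt G (proj1_sig e)) (proj2 (proj2_sig e))).

Definition scc_graph (G : digraph) (x : vert G) : digraph :=
  induced G (scc_rel G x).

From Stdlib Require Import Reals List ProofIrrelevance.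
Import ListNotations.

(* A vertex set P is walk-convex when every vertex lying on a walk between two
   points of P is itself in P.  Then walks of G between points of P are exactly
   the walks of the induced subgraph, so distances, geodesics and balls agree
   and every geodesic triangle of the subgraph is one of G.  A strongly
   connected component is walk-convex: a vertex after x and before x on a walk
   is strongly connected to x. *)

Lemma last_cons_default {A : Type} (x y : A) (l : list A) :
  last (y :: l) x = last l y.
Proof.
  revert x y; induction l as [|z l IH]; intros x y; [reflexivity|].
  change (last (z :: l) x = last (z :: l) y); now rewrite !IH.
Qed.

Lemma last_app_default {A : Type} (x : A) (l1 l2 : list A) :
  last (l1 ++ l2) x = last l2 (last l1 x).
Proof.
  revert x; induction l1 as [|y l1 IH]; intros x; [reflexivity|].
  simpl app; rewrite !last_cons_default; apply IH.
Qed.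

Section Walks.
Variable G : digraph.

Lemma chain_app (x : vert G) (l1 l2 : list (vert G)) :
  chain G x l1 -> chain G (last l1 x) l2 -> chain G x (l1 ++ l2).
Proof.
  revert x; induction l1 as [|y l1 IH]; intros x H1 H2; [exact H2|].
  destruct H1 as [Hxy H1]; split; [exact Hxy|].
  apply IH; [exact H1|]; rewrite <- (last_cons_default x); exact H2.
Qed.

Lemma reachableP (u v : vert G) :
  reachable G u v <-> exists l, chain G u l /\ last l u = v.
Proof.
  split.
  - intros [n [l [Hc [Hl _]]]]; eauto.
  - intros [l [Hc Hl]]; exists (length l), l; auto.
Qed.

Lemma reachable_trans (u v w : vert G) :
  reachable G u v -> reachable G v w -> reachable G u w.
Proof.
  rewrite !reachableP; intros [l1 [Hc1 <-]] [l2 [Hc2 <-]].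
  exists (l1 ++ l2); split; [now apply chain_app | apply last_app_default].
Qed.

Lemma reachable_chain (u : vert G) (l : list (vert G)) :
  chain G u l -> reachable G u (last l u).
Proof. intros Hc; apply reachableP; eauto. Qed.

Lemma reachable_adj (u v : vert G) : adj G u v -> reachable G u v.
Proof. intros Huv; apply reachableP; exists [v]; simpl; auto. Qed.

Definition walk_convex (P : vert G -> Prop) : Prop :=
  forall u v w, P u -> P w -> reachable G u v -> reachable G v w -> P v.

Lemma scc_walk_convex (x : vert G) : walk_convex (scc_rel G x).
Proof.
  intros u v w [Hxu _] [_ Hwx] Huv Hvw; split.
  - now apply reachable_trans with u.
  - now apply reachable_trans with w.
Qed.

End Walks.

Section Induced.
Variable G : digraph.
Variable P : vert G -> Prop.
Hypothesis P_convex : walk_convex G P.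

Let H := induced G P.
Notation val := (@proj1_sig (vert G) P).
Notation vals := (map val).

Lemma induced_val_inj (u v : vert H) : val u = val v -> u = v.
Proof. destruct u, v; apply subset_eq_compat. Qed.

Lemma induced_adj (u v : vert H) : adj H u v <-> adj G (val u) (val v).
Proof.
  split.
  - intros [e [<- <-]]; exists (proj1_sig e); auto.
  - destruct u as [u Pu], v as [v Pv]; simpl; intros [e [<- <-]].
    exists (exist (fun e => P (src G e) /\ P (tgt G e)) e (conj Pu Pv)).
    split; now apply subset_eq_compat.
Qed.

Lemma last_vals (u : vert H) (l : list (vert H)) :
  last (vals l) (val u) = val (last l u).
Proof.
  revert u; induction l as [|v l IH]; intros u; [reflexivity|].
  simpl map; rewrite !last_cons_default; apply IH.
Qed.

Lemma chain_vals (u : vert H) (l : list (vert H)) :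
  chain H u l -> chain G (val u) (vals l).
Proof.
  revert u; induction l as [|v l IH]; intros u Hc; [exact I|].
  destruct Hc as [Huv Hc]; split; [now apply induced_adj | now apply IH].
Qed.

(* Every vertex of the walk is reachable from [val u] and reaches its end,
   which lies in P: this is where convexity is used. *)
Lemma chain_lift (l : list (vert G)) (u : vert H) :
  chain G (val u) l -> P (last l (val u)) ->
  exists l', vals l' = l /\ chain H u l'.
Proof.
  revert u; induction l as [|y l IH]; intros u Hc Hend.
  - exists []; simpl; auto.
  - destruct Hc as [Huy Hc]; rewrite last_cons_default in Hend.
    assert (Py : P y).
    { apply (P_convex (val u) y (last l y)); auto.
      - exact (proj2_sig u).
      - now apply reachable_adj.
      - now apply reachable_chain. }
    destruct (IH (exist P y Py) Hc Hend) as [l' [Hl' Hc']].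
    exists (exist P y Py :: l'); simpl; rewrite Hl'; split; auto.
    split; [now apply induced_adj | exact Hc'].
Qed.

Lemma induced_has_walk (u w : vert H) (n : nat) :
  has_walk H u w n <-> has_walk G (val u) (val w) n.
Proof.
  split.
  - intros [l [Hc [<- <-]]]; exists (vals l).
    rewrite last_vals, length_map; auto using chain_vals.
  - intros [l [Hc [Hend <-]]].
    destruct (chain_lift l u Hc) as [l' [<- Hc']];
      [rewrite Hend; exact (proj2_sig w)|].
    exists l'; rewrite length_map; repeat split; auto.
    apply induced_val_inj; now rewrite <- last_vals.
Qed.

Lemma induced_dist_le (u w : vert H) (r : R) :
  dist_le H u w r <-> dist_le G (val u) (val w) r.
Proof.
  unfold dist_le; split; intros [n [Hn Hw]]; exists n;
    rewrite induced_has_walk in *; auto.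
Qed.

Lemma geodesic_vals (u : vert H) (l : list (vert H)) :
  geodesic H u l -> geodesic G (val u) (vals l).
Proof.
  intros [Hc Hmin]; split; [now apply chain_vals|].
  intros m Hw; rewrite last_vals, <- induced_has_walk in Hw.
  rewrite length_map; now apply Hmin.
Qed.

Lemma out_ball_vals (S : list (vert H)) (r : R) (y : vert H) :
  out_ball G (vals S) r (val y) -> out_ball H S r y.
Proof.
  intros [z [Hz Hzy]]; apply in_map_iff in Hz as [z' [<- Hz']].
  exists z'; rewrite induced_dist_le; auto.
Qed.

Lemma in_ball_vals (S : list (vert H)) (r : R) (y : vert H) :
  in_ball G (vals S) r (val y) -> in_ball H S r y.
Proof.
  intros [z [Hz Hyz]]; apply in_map_iff in Hz as [z' [<- Hz']].
  exists z'; rewrite induced_dist_le; auto.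
Qed.

Lemma thin_triangle_vals (delta : R) (a : vert H) (lp lq lr : list (vert H)) :
  thin_triangle G delta (val a) (vals lp) (vals lq) (vals lr) ->
  thin_triangle H delta a lp lq lr.
Proof.
  unfold thin_triangle; cbv zeta; rewrite last_vals.
  change (val a :: vals lp) with (vals (a :: lp));
  change (val a :: vals lr) with (vals (a :: lr));
  change (val (last lp a) :: vals lq) with (vals (last lp a :: lq)).
  intros [Hr [Hp Hq]].
  repeat split; intros v Hv;
    [destruct (Hr (val v)) | destruct (Hp (val v)) | destruct (Hq (val v))];
    auto using in_map, out_ball_vals, in_ball_vals.
Qed.

Theorem strongly_hyperbolic_induced (delta : R) :
  strongly_hyperbolic G delta -> strongly_hyperbolic H delta.
Proof.
  intros Hhyp a lp lq lr Hp Hq Hr Hend.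
  apply thin_triangle_vals, Hhyp.
  - now apply geodesic_vals.
  - rewrite last_vals; now apply geodesic_vals.
  - now apply geodesic_vals.
  - now rewrite !last_vals, Hend.
Qed.

End Induced.

Theorem proposition2p5 (G : digraph) (delta : R) :
  strongly_hyperbolic G delta ->
  forall x : vert G, strongly_hyperbolic (scc_graph G x) delta.
Proof.
  intros Hhyp x.
  exact (strongly_hyperbolic_induced G _ (scc_walk_convex G x) delta Hhyp).
Qed.
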